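(* Let $m\ge 2$ be even and $n\ge 2$, and let $\mathcal{P}$ be the $m$th order $n$-dimensional Pascal tensor. Then $\mathcal{P}$ is a positive semi-definite tensor and an SOS tensor. Furthermore, if the determinant $f(m,n)=\det(\mathcal{P})$ is nonzero, then $\mathcal{P}$ is a positive definite tensor.
   Context: The $m$th order $n$-dimensional Pascal tensor is $\mathcal{P}=(p_{i_1\dots i_m})$ with $p_{i_1\dots i_m}=\frac{(i_1+\dots+i_m-m)!}{(i_1-1)!\cdots(i_m-1)!}$ for $i_1,\dots,i_m\in\{1,\dots,n\}$ (for $m=2$ this is the symmetric Pascal matrix). For a symmetric $m$th order $n$-dimensional real tensor $\mathcal{A}=(a_{i_1\dots i_m})$ and $\mathbf{x}\in\mathbb{R}^n$, let $\mathcal{A}\mathbf{x}^m=\sum_{i_1,\dots,i_m}a_{i_1\dots i_m}x_{i_1}\cdots x_{i_m}$, and let $\mathcal{A}\mathbf{x}^{m-1}\in\mathbb{R}^n$ be the vector with $i$th component $\sum_{i_2,\dots,i_m}a_{i i_2\dots i_m}x_{i_2}\cdots x_{i_m}$. For $m$ even, $\mathcal{A}$ is positive semi-definite if $\mathcal{A}\mathbf{x}^m\ge 0$ for all $\mathbf{x}\in\mathbb{R}^n$, positive definite if $\mathcal{A}\mathbf{x}^m>0$ for all nonzero $\mathbf{x}\in\mathbb{R}^n$, and an SOS tensor if the polynomial $\mathcal{A}\mathbf{x}^m$ is a sum of squares of polynomials in $x_1,\dots,x_n$. The determinant $\det(\mathcal{A})$ is the (multivariate) resultant of the system of $n$ homogeneous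 polynomials $\mathcal{A}\mathbf{x}^{m-1}=\mathbf{0}$. *)

From HB Require Import structures.
From mathcomp Require Import all_boot all_order all_algebra.
From mathcomp Require Import complex.
From mathcomp Require Import mpoly.
Set Implicit Arguments. Unset Strict Implicit. Unset Printing Implicit Defensive.
Import Order.TTheory GRing.Theory Num.Theory.
Local Open Scope ring_scope.

(* An m-th order n-dimensional tensor over R. Indices are 0-based:
   a multi-index (i_1,...,i_m) is a function f : 'I_m -> 'I_n, and the
   paper's index i_k in {1..n} corresponds to (f k).+1. *)
Definition tensor (R : Type) (m n : nat) := {ffun 'I_m -> 'I_n} -> R.

(* Pascal tensor: p_{i_1..i_m} = (i_1+...+i_m-m)! / ((i_1-1)!...(i_m-1)!),
   written with 0-based indices j_k = i_k - 1. *)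
Definition pascal (F : fieldType) (m n : nat) : tensor F m n :=
  fun f => ((\sum_(k < m) (f k : nat))`!)%:R / (\prod_(k < m) ((f k : nat)`!)%:R).

Arguments pascal : clear implicits.

Definition tform (R : comNzRingType) m n (A : tensor R m n) (x : 'I_n -> R) : R :=
  \sum_(f : {ffun 'I_m -> 'I_n}) A f * \prod_(k < m) x (f k).

Definition tvec (R : comNzRingType) m n (A : tensor R m n) (x : 'I_n -> R)
    (i : 'I_n) : R :=
  \sum_(f : {ffun 'I_m -> 'I_n} | [forall k : 'I_m, (val k == 0%N) ==> (f k == i)])
     A f * \prod_(k < m | val k != 0%N) x (f k).

Definition tpoly (R : comNzRingType) m n (A : tensor R m n) : {mpoly R[n]} :=
  \sum_(f : {ffun 'I_m -> 'I_n}) A f *: \prod_(k < m) 'X_(f k).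

Definition is_psd (R : realDomainType) m n (A : tensor R m n) : Prop :=
  forall x : 'I_n -> R, 0 <= tform A x.

Definition is_pd (R : realDomainType) m n (A : tensor R m n) : Prop :=
  forall x : 'I_n -> R, (exists i, x i != 0) -> 0 < tform A x.

Definition is_sos (R : comNzRingType) m n (A : tensor R m n) : Prop :=
  exists s : seq {mpoly R[n]}, tpoly A = \sum_(p <- s) p ^+ 2.

(* det(A) <> 0 : the multivariate resultant of the system A x^{m-1} = 0
   is nonzero, i.e. (defining property of the resultant over the algebraic
   closure) the system has no nontrivial common zero over C. *)
Definition tdet_nonzero (C : comNzRingType) m n (A : tensor C m n) : Prop :=
  forall x : 'I_n -> C, (forall i, tvec A x i = 0) -> forall i, x i = 0.

(* Write a multi-index of order 2r as a concatenation (g1, g2) of two order-r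
   multi-indices with index sums a and b.  The Pascal entry then factors as
   p(g1) p(g2) C(a + b, a), and Vandermonde's identity
   C(a + b, a) = sum_k C(a, k) C(b, k) turns the form P x^2r into
   sum_k Q_k(x)^2 with Q_k(x) = sum_g p(g) C(|g|, k) x^g.  The same splitting of
   the first index shows that every component of P x^(2r-1) is a combination
   of the Q_k(x), so P x^2r = 0 forces P x^(2r-1) = 0; when det P != 0 this
   only happens for x = 0. *)
From HB Require Import structures.
From mathcomp Require Import all_boot all_order all_algebra.
From mathcomp Require Import complex mpoly.
From mathcomp Require Import ring.
Set Implicit Arguments. Unset Strict Implicit. Unset Printing Implicit Defensive.
Import Order.TTheory GRing.Theory Num.Theory.
Local Open Scope ring_scope.

Section FfunCat.
Variables (T : finType) (p q : nat).

Definition ffun_cat (g1 : {ffun 'I_p -> T}) (g2 : {ffun 'I_q -> T}) :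
    {ffun 'I_(p + q) -> T} :=
  [ffun i => match split i with inl a => g1 a | inr b => g2 b end].

Lemma ffun_cat_lshift g1 g2 a : ffun_cat g1 g2 (lshift q a) = g1 a.
Proof. by rewrite ffunE (unsplitK (inl _ a)). Qed.

Lemma ffun_cat_rshift g1 g2 b : ffun_cat g1 g2 (rshift p b) = g2 b.
Proof. by rewrite ffunE (unsplitK (inr _ b)). Qed.

Lemma big_ffun_cat (U : Type) (idx : U) (op : Monoid.law idx) g1 g2 (F : T -> U) :
  \big[op/idx]_(k < p + q) F (ffun_cat g1 g2 k) =
  op (\big[op/idx]_(a < p) F (g1 a)) (\big[op/idx]_(b < q) F (g2 b)).
Proof.
by rewrite big_split_ord; f_equal; apply: eq_bigr => a _;
  rewrite ?ffun_cat_lshift ?ffun_cat_rshift.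
Qed.

Lemma sum_ffun_cat (V : nmodType) (F : {ffun 'I_(p + q) -> T} -> V) :
  \sum_f F f = \sum_g1 \sum_g2 F (ffun_cat g1 g2).
Proof.
rewrite pair_big /= (reindex (fun g => ffun_cat g.1 g.2)) //=.
exists (fun f => ([ffun a => f (lshift q a)], [ffun b => f (rshift p b)])).
  move=> [g1 g2] _ /=; congr pair; apply/ffunP => a;
  by rewrite ffunE ?ffun_cat_lshift ?ffun_cat_rshift.
move=> f _; apply/ffunP => i; rewrite ffunE.
by case: splitP => j ij; rewrite ffunE; congr (f _); apply: val_inj.
Qed.

End FfunCat.

Section FfunCatHead.
Variables (T : finType) (p q : nat) (g1 : {ffun 'I_p.+1 -> T}) (g2 : {ffun 'I_q -> T}).

Lemma ffun_cat_head t :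
  [forall k : 'I_(p.+1 + q), (val k == 0%N) ==> (ffun_cat g1 g2 k == t)] =
  (g1 ord0 == t).
Proof.
apply/forallP/eqP => [head_t | <- k].
  by move/implyP: (head_t (lshift q ord0)) => /(_ erefl)/eqP; rewrite ffun_cat_lshift.
apply/implyP => /eqP k0.
have -> : k = lshift q ord0 by apply: val_inj; rewrite /= k0.
by rewrite ffun_cat_lshift.
Qed.

Lemma prod_ffun_cat_behead (R : comNzRingType) (F : T -> R) :
  \prod_(k < p.+1 + q | val k != 0%N) F (ffun_cat g1 g2 k) =
  (\prod_(a < p.+1 | val a != 0%N) F (g1 a)) * \prod_(b < q) F (g2 b).
Proof.
rewrite big_mkcond big_split_ord [in RHS](big_mkcond (fun a : 'I_p.+1 => _)).
by congr (_ * _); apply: eq_bigr => a _; rewrite ?ffun_cat_lshift ?ffun_cat_rshift.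
Qed.

End FfunCatHead.

Lemma binomial_addn_sum (a b K : nat) : (a < K)%N ->
  'C(a + b, a) = (\sum_(k < K) 'C(a, k) * 'C(b, k))%N.
Proof.
move=> a_lt_K; rewrite -binomial.Vandermonde.
transitivity (\sum_(j < a.+1) 'C(a, j) * 'C(b, j))%N.
  rewrite (reindex_inj rev_ord_inj) /=; apply: eq_bigr => j _.
  by rewrite subSS bin_sub ?subKn // -ltnS.
rewrite (big_ord_widen K (fun j => 'C(a, j) * 'C(b, j))%N a_lt_K) big_mkcond.
by apply: eq_bigr => j _; case: ltnP => // ?; rewrite bin_small.
Qed.

Lemma tform_rmorph (R S : comNzRingType) (phi : {rmorphism R -> S}) m n
    (A : tensor R m n) (x : 'I_n -> R) :
  tform (phi \o A) (phi \o x) = phi (tform A x).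
Proof. by rewrite rmorph_sum; apply: eq_bigr => f _; rewrite rmorphM rmorph_prod. Qed.

Lemma tpolyE (R : comNzRingType) m n (A : tensor R m n) :
  tpoly A = tform (mpolyC n (R:=R) \o A) (fun i => 'X_i).
Proof. by apply: eq_bigr => f _; rewrite mul_mpolyC. Qed.

Lemma pascal_rmorph (F K : fieldType) (phi : {rmorphism F -> K}) m n :
  pascal K m n =1 phi \o pascal F m n.
Proof. by move=> f; rewrite /pascal /= -!natr_prod fmorph_div !rmorph_nat. Qed.

Section PascalFactor.
Variables (R : numFieldType) (n : nat).

Definition index_sum r (g : {ffun 'I_r -> 'I_n}) : nat := \sum_(k < r) (g k : nat).

Lemma index_sum_lt r (g : {ffun 'I_r -> 'I_n}) : (index_sum g < (r * n).+1)%N.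
Proof.
rewrite ltnS -[X in (_ <= X * _)%N]card_ord -sum_nat_const.
by apply: leq_sum => k _; apply: ltnW.
Qed.

Lemma prod_fact_neq0 r (g : {ffun 'I_r -> 'I_n}) :
  (\prod_(k < r) ((g k : nat)`!)%:R : R) != 0.
Proof. by rewrite -natr_prod pnatr_eq0 -lt0n prodn_gt0 // => k; apply: fact_gt0. Qed.

Lemma pascal_cat p q (g1 : {ffun 'I_p -> 'I_n}) (g2 : {ffun 'I_q -> 'I_n}) :
  pascal R (p + q) n (ffun_cat g1 g2) =
  pascal R p n g1 * pascal R q n g2 *
  'C(index_sum g1 + index_sum g2, index_sum g1)%:R.
Proof.
rewrite /pascal (big_ffun_cat _ _ _ (fun j : 'I_n => j : nat)).
rewrite (big_ffun_cat _ _ _ (fun j : 'I_n => ((j : nat)`!)%:R : R)).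
rewrite -/(index_sum g1) -/(index_sum g2).
have := prod_fact_neq0 g1; have := prod_fact_neq0 g2.
set P1 := \prod_(k < p) _; set P2 := \prod_(k < q) _ => P2_neq0 P1_neq0.
rewrite -(bin_fact (leq_addr (index_sum g2) (index_sum g1))) addKn !natrM.
rewrite -[X in _ / X]/(P1 * P2).
by field; rewrite P1_neq0 P2_neq0.
Qed.

Definition pascal_factor r (k : nat) : tensor R r n :=
  fun g => pascal R r n g * 'C(index_sum g, k)%:R.

End PascalFactor.

Arguments pascal_factor R n r k g : clear implicits.

Section PascalGram.
Variables (R : numFieldType) (S : comNzRingType) (phi : {rmorphism R -> S}) (n : nat).

Lemma pascal_cat_bilinear r (P : pred {ffun 'I_r -> 'I_n})
    (Y1 Y2 : {ffun 'I_r -> 'I_n} -> S) :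
  \sum_(g1 | P g1) \sum_g2 phi (pascal R (r + r) n (ffun_cat g1 g2)) * (Y1 g1 * Y2 g2) =
  \sum_(k < (r * n).+1)
     (\sum_(g1 | P g1) phi (pascal_factor R n r k g1) * Y1 g1) *
     (\sum_g2 phi (pascal_factor R n r k g2) * Y2 g2).
Proof.
have pascal_catE g1 g2 : phi (pascal R (r + r) n (ffun_cat g1 g2)) =
    \sum_(k < (r * n).+1)
      phi (pascal_factor R n r k g1) * phi (pascal_factor R n r k g2).
  rewrite pascal_cat (binomial_addn_sum _ (index_sum_lt g1)) natr_sum mulr_sumr.
  rewrite rmorph_sum; apply: eq_bigr => k _.
  by rewrite -rmorphM natrM /pascal_factor; congr (phi _); ring.
under eq_bigr => g1 _ do under eq_bigr => g2 _ do rewrite pascal_catE mulr_suml.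
under [RHS]eq_bigr => k _ do rewrite mulr_suml.
under [RHS]eq_bigr => k _ do under eq_bigr => g1 _ do rewrite mulr_sumr.
rewrite [RHS]exchange_big; apply: eq_bigr => g1 _.
rewrite [RHS]exchange_big; apply: eq_bigr => g2 _.
by apply: eq_bigr => k _; ring.
Qed.

Lemma tform_pascal_sum_sqr r (y : 'I_n -> S) :
  tform (phi \o pascal R (r + r) n) y =
  \sum_(k < (r * n).+1) tform (phi \o pascal_factor R n r k) y ^+ 2.
Proof.
rewrite /tform sum_ffun_cat.
under eq_bigr => g1 _ do under eq_bigr => g2 _ do rewrite big_ffun_cat.
by rewrite pascal_cat_bilinear; apply: eq_bigr => k _; rewrite expr2.
Qed.

Lemma tvec_pascal r (y : 'I_n -> S) (i : 'I_n) :
  tvec (phi \o pascal R (r.+1 + r.+1) n) y i =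
  \sum_(k < (r.+1 * n).+1)
     (\sum_(g : {ffun 'I_r.+1 -> 'I_n} | g ord0 == i)
         phi (pascal_factor R n r.+1 k g) * \prod_(a < r.+1 | val a != 0%N) y (g a)) *
     tform (phi \o pascal_factor R n r.+1 k) y.
Proof.
rewrite /tvec big_mkcond sum_ffun_cat -pascal_cat_bilinear [RHS]big_mkcond.
apply: eq_bigr => g1 _; rewrite /=.
under eq_bigr => g2 _ do rewrite ffun_cat_head.
case: (g1 ord0 == i); last by rewrite big1.
by apply: eq_bigr => g2 _; rewrite prod_ffun_cat_behead.
Qed.

End PascalGram.

Section PascalDefinite.
Variables (R : rcfType) (n : nat).

Lemma pascal_psd r : is_psd (pascal R (r + r) n).
Proof.
move=> x; rewrite -[tform _ _]/(tform (idfun \o pascal R (r + r) n) x).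
by rewrite tform_pascal_sum_sqr sumr_ge0 // => k _; apply: sqr_ge0.
Qed.

Lemma pascal_sos r : is_sos (pascal R (r + r) n).
Proof.
exists [seq tform (mpolyC n (R:=R) \o pascal_factor R n r k) (fun i => 'X_i)
          | k : 'I_(r * n).+1 <- index_enum 'I_(r * n).+1].
by rewrite big_map tpolyE tform_pascal_sum_sqr.
Qed.

Lemma pascal_factor_form_eq0 r (x : 'I_n -> R) :
  tform (pascal R (r + r) n) x = 0 ->
  forall k : 'I_(r * n).+1, tform (pascal_factor R n r k) x = 0.
Proof.
rewrite -[tform _ _]/(tform (idfun \o pascal R (r + r) n) x) tform_pascal_sum_sqr.
move=> /psumr_eq0P sum_sqr_eq0 k.
by apply/eqP; rewrite -sqrf_eq0; apply/eqP/sum_sqr_eq0 => // j _; apply: sqr_ge0.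
Qed.

Lemma pascal_pd r :
  tdet_nonzero (pascal (complex R) (r.+1 + r.+1) n) -> is_pd (pascal R (r.+1 + r.+1) n).
Proof.
move=> det_neq0 x [i x_i_neq0]; rewrite lt_def pascal_psd andbT.
apply: contra x_i_neq0 => /eqP/pascal_factor_form_eq0 factor_eq0.
pose xC := real_complex R \o x.
suff /(_ i)/eqP : forall j, xC j = 0 by rewrite fmorph_eq0.
apply: det_neq0 => j; rewrite /tvec.
under eq_bigr => f _ do rewrite (pascal_rmorph (real_complex R)).
rewrite -/(tvec _ _ _) tvec_pascal big1 // => k _.
by rewrite tform_rmorph factor_eq0 rmorph0 mulr0.
Qed.

End PascalDefinite.

Lemma even_ge2_addSS m : ~~ odd m -> (2 <= m)%N -> exists r, m = (r.+1 + r.+1)%N.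
Proof.
move=> m_even m_ge2; exists m./2.-1; rewrite prednK ?addnn.
  by rewrite -{1}(odd_double_half m) (negbTE m_even).
by case: m m_ge2 m_even => [|[|m]].
Qed.

Unset Implicit Arguments.

Theorem theorem2p1 (R : rcfType) (m n : nat) :
  ~~ odd m -> (2 <= m)%N -> (2 <= n)%N ->
  [/\ is_psd (pascal R m n),
      is_sos (pascal R m n) &
      (tdet_nonzero (pascal (complex R) m n) -> is_pd (pascal R m n))].
Proof.
move=> m_even m_ge2 _; have [r ->] := even_ge2_addSS m_even m_ge2.
by split; [apply: pascal_psd | apply: pascal_sos | apply: pascal_pd].
Qed.
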